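(* Let $A$ be a commutative ring whose set of zero-divisors $Z(A)$ equals the union of its minimal prime ideals. Then the canonical group morphism $\mathfrak{C}(A)\to\mathfrak{C}(A_{\mathrm{red}})$, induced by the ring map $T(A)\to T(A_{\mathrm{red}})$, $a/s\mapsto (a+\mathfrak N)/(s+\mathfrak N)$ ($\mathfrak N$ the nilradical of $A$), is an isomorphism.
   Context: All rings are commutative with identity; $R_{\mathrm{red}}$ is $R$ modulo its nilradical, $T(R)$ is the total ring of fractions. For $R$-submodules $L,L'$ of $T(R)$, $LL'$ is the $R$-submodule of finite sums $\sum x_ky_k$. An $R$-submodule $L$ of $T(R)$ is an invertible ideal of $R$ if $LL'=R$ for some $R$-submodule $L'$ of $T(R)$; these form an abelian group and $\mathfrak{C}(R)$ is this group modulo $\{Rx: x\in T(R)^\ast\}$. The map $\mathfrak{C}(A)\to\mathfrak{C}(A_{\mathrm{red}})$ sends the class of $L$ to the class of the $A_{\mathrm{red}}$-submodule generated by the image of $L$. *)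

(* Commutative rings are [comPzRingType] (zero ring allowed). *)
From mathcomp Require Import all_boot all_algebra.
From Stdlib Require List.
Set Implicit Arguments. Unset Strict Implicit. Unset Printing Implicit Defensive.
Import GRing.Theory.
Local Open Scope ring_scope.

Section Defs.
Variable R : comPzRingType.

Definition regular (a : R) : Prop := forall b : R, a * b = 0 -> b = 0.
Definition zero_divisor (a : R) : Prop := exists b : R, b <> 0 /\ a * b = 0.
Definition unitP (x : R) : Prop := exists y : R, x * y = 1.
Definition nilpotentP (a : R) : Prop := exists n : nat, a ^+ n = 0.

Definition is_ideal (P : R -> Prop) : Prop :=
  P 0 /\ (forall x y, P x -> P y -> P (x + y)) /\ (forall r x, P x -> P (r * x)).
Definition is_prime_ideal (P : R -> Prop) : Prop :=
  is_ideal P /\ ~ P 1 /\ (forall a b, P (a * b) -> P a \/ P b).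
Definition is_minimal_prime (P : R -> Prop) : Prop :=
  is_prime_ideal P /\
  (forall Q : R -> Prop, is_prime_ideal Q -> (forall x, Q x -> P x) ->
     forall x, P x -> Q x).
End Defs.

(* [iA : A -> T] presents T as the total ring of fractions T(A):
   injective, regular elements become units, every element is a/s, s regular. *)
Definition total_ring_of_fractions (A T : comPzRingType) (iA : {rmorphism A -> T}) :=
  injective iA /\ (forall s, regular s -> unitP (iA s)) /\
  (forall x : T, exists a s, regular s /\ x * iA s = iA a).

(* [pi : A -> B] presents B as A_red = A / nilradical. *)
Definition reduction_map (A B : comPzRingType) (pi : {rmorphism A -> B}) :=
  (forall b : B, exists a, pi a = b) /\ (forall a, pi a = 0 <-> nilpotentP a).

Section Submodules.
Variables (A T : comPzRingType) (iA : {rmorphism A -> T}).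

Definition is_submodule (L : T -> Prop) : Prop :=
  L 0 /\ (forall x y, L x -> L y -> L (x + y)) /\ (forall r x, L x -> L (iA r * x)).

Definition prod_sub (L L' : T -> Prop) (z : T) : Prop :=
  exists s : seq (T * T), (forall p, List.In p s -> L p.1 /\ L' p.2) /\
    z = \sum_(p <- s) (p.1 * p.2).

Definition base_sub (z : T) : Prop := exists r, z = iA r.

Definition invertible_ideal (L : T -> Prop) : Prop :=
  is_submodule L /\
  exists L', is_submodule L' /\ forall z, prod_sub L L' z <-> base_sub z.

(* L and M have the same class in C(A): M = L x for some unit x of T *)
Definition same_class (L M : T -> Prop) : Prop :=
  exists x : T, unitP x /\ forall z, M z <-> exists y, L y /\ z = x * y.
End Submodules.

Definition sub_eq (T : Type) (L M : T -> Prop) := forall z, L z <-> M z.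

(* B-submodule of TB generated by phi(L) *)
Definition ext_sub (B TA TB : comPzRingType) (iB : {rmorphism B -> TB})
  (phi : {rmorphism TA -> TB}) (L : TA -> Prop) (z : TB) : Prop :=
  exists s : seq (B * TA), (forall p, List.In p s -> L p.2) /\
    z = \sum_(p <- s) (iB p.1 * phi p.2).

(* Writing x in T(A) as a/s with s regular, a/s |-> (a mod N)/(s mod N) is a
   ring map phi : T(A) -> T(A_red) whose kernel is nil.  It is onto because of
   the hypothesis on Z(A): if s is a zero-divisor, it lies in a minimal prime P,
   so y s^n = 0 for some y outside P, and y is not nilpotent; hence s stays a
   zero-divisor modulo N, i.e. regular elements of A_red lift to regular ones.
   Both A -> A_red and phi are thus surjections with nil kernel, and the rest
   only uses this.  Extension of ideals along phi is multiplicative and maps A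
   to A_red; it reflects classes because units lift modulo nilpotents and an
   inclusion L <= M of invertible ideals with the same image is an equality.
   It is onto on classes: an invertible ideal I of A_red has a dual basis
   n, n' with sum n_i n'_i = 1, so n' n is an idempotent matrix over A_red; it
   lifts to an idempotent over A, whose image in T(A) factors as c r with
   r c = 1, and the ideal spanned by the entries of r is invertible with
   extension I. *)

From HB Require Import structures.
From mathcomp Require Import all_boot all_algebra.
From mathcomp Require Import ring.
From mathcomp Require classical_sets.
From Stdlib Require Import Classical ClassicalEpsilon.
Set Implicit Arguments. Unset Strict Implicit. Unset Printing Implicit Defensive.
Import GRing.Theory.
Local Open Scope ring_scope.

Lemma expr_eq0_leq (R : pzRingType) (x : R) m n :
  x ^+ m = 0 -> (m <= n)%N -> x ^+ n = 0.
Proof. by move=> xm /subnKC <-; rewrite exprD xm mul0r. Qed.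

Section CommRingFacts.
Variable R : comPzRingType.
Implicit Types x y z s t : R.

Lemma regularM s t : regular s -> regular t -> regular (s * t).
Proof. by move=> hs ht b; rewrite -mulrA => /hs /ht. Qed.

Lemma regularX s n : regular s -> regular (s ^+ n).
Proof.
move=> hs; elim: n => [|n IH]; first by move=> b; rewrite expr0 mul1r.
by rewrite exprS; apply: regularM.
Qed.

Lemma regular1 : regular (1 : R).
Proof. by move=> b; rewrite mul1r. Qed.

Lemma unitP_regular x : unitP x -> regular x.
Proof. by move=> [y xy] b xb; rewrite -[b]mul1r -xy mulrAC xb mul0r. Qed.

Lemma unitP_mulIr x y z : unitP x -> y * x = z * x -> y = z.
Proof.
move=> ux e; apply/eqP; rewrite -subr_eq0; apply/eqP.
by apply: (unitP_regular ux); rewrite mulrBr mulrC e mulrC subrr.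
Qed.

Lemma unitP_nilpotent_sub1 x : nilpotentP (x - 1) -> unitP x.
Proof.
move=> [n xn]; exists (\sum_(i < n) (1 - x) ^+ i).
have := subrX1 (1 - x) n.
have -> : (1 - x) ^+ n = 0 by rewrite -opprB -mulN1r exprMn xn mulr0.
by rewrite sub0r addrAC subrr add0r mulNr => /oppr_inj.
Qed.

Lemma not_regular_zero_divisor s : ~ regular s -> zero_divisor s.
Proof.
move=> nreg; apply: NNPP => nzd; apply: nreg => b sb.
by apply: NNPP => b0; apply: nzd; exists b.
Qed.

Lemma prime_idealX (P : R -> Prop) x n : is_prime_ideal P -> P (x ^+ n) -> P x.
Proof.
move=> [_ [P1 Pp]]; elim: n => [|n IH]; first by rewrite expr0 => /P1.
by rewrite exprS => /Pp [].
Qed.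

End CommRingFacts.

Arguments regular1 {R}.

(** * Minimal primes *)

Section MinimalPrimes.
Variable R : comPzRingType.

(* Not required to contain [0], so that the empty set qualifies and Zorn's
   lemma applies to the union of the empty chain. *)
Definition avoiding_ideal (S I : R -> Prop) : Prop :=
  (forall x, I x -> ~ S x) /\
  (forall x y, I x -> I y -> I (x + y)) /\ (forall r x, I x -> I (r * x)).

Lemma maximal_avoiding_ideal (S : R -> Prop) : ~ S 0 ->
  exists Q, Q 0 /\ avoiding_ideal S Q /\
    forall I, classical_sets.proper Q I -> ~ avoiding_ideal S I.
Proof.
move=> S0; have [Q [[QS [QD QM]] Qmax]] : exists Q, avoiding_ideal S Q /\
    forall I, classical_sets.proper Q I -> ~ avoiding_ideal S I.
  apply: classical_sets.Zorn_bigcup => F FS Ftot; split; [|split].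
  - by move=> x [X FX Xx]; have [+ _] := FS X FX; apply.
  - move=> x y [X FX Xx] [Y FY Yy]; have [XY|YX] := Ftot X Y FX FY.
    + by exists Y => //; have [_ [+ _]] := FS Y FY; apply => //; apply: XY.
    + by exists X => //; have [_ [+ _]] := FS X FX; apply => //; apply: YX.
  - by move=> r x [X FX Xx]; exists X => //; have [_ [_ +]] := FS X FX; apply.
exists Q; split; last by split.
have [x Qx] : exists x, Q x.
  apply: NNPP => nQ; apply: (Qmax (fun z => z = 0)).
    split; first by move=> t Qt; case: nQ; exists t.
    by move=> /(_ 0 erefl) Q0; apply: nQ; exists 0.
  split; first by move=> x ->.
  by split=> [x y -> ->|r x ->]; rewrite ?addr0 ?mulr0.
by have := QM 0 x Qx; rewrite mul0r.
Qed.

Lemma prime_ideal_avoiding (S : R -> Prop) :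
  S 1 -> (forall x y, S x -> S y -> S (x * y)) -> ~ S 0 ->
  exists Q, is_prime_ideal Q /\ forall x, Q x -> ~ S x.
Proof.
move=> S1 SM /maximal_avoiding_ideal [Q [Q0 [[QS [QD QM]] Qmax]]].
have grow c : ~ Q c -> exists q r, Q q /\ S (q + r * c).
  move=> nQc; apply: NNPP => nS.
  apply: (Qmax (fun z => exists q r, Q q /\ z = q + r * c)).
    split; first by move=> z Qz; exists z, 0; rewrite mul0r addr0.
    by move=> sub; apply: nQc; apply: sub; exists 0, 1; rewrite mul1r add0r.
  split; [|split].
  - by move=> z [q [r [Qq ->]]] Sz; apply: nS; exists q, r.
  - move=> z w [q [r [Qq ->]]] [q' [r' [Qq' ->]]].
    by exists (q + q'), (r + r'); split; [exact: QD | ring].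
  - move=> t z [q [r [Qq ->]]].
    by exists (t * q), (t * r); split; [exact: QM | ring].
exists Q; split=> //; split; first by split=> //; split.
split; first by move=> /QS.
move=> a b Qab; apply: NNPP => /not_or_and [nQa nQb].
have [q1 [r1 [Qq1 Sa]]] := grow a nQa; have [q2 [r2 [Qq2 Sb]]] := grow b nQb.
apply: (QS _ _ (SM _ _ Sa Sb)).
have -> : (q1 + r1 * a) * (q2 + r2 * b) =
    (q2 + r2 * b) * q1 + (r1 * a * q2 + (r1 * r2) * (a * b)) by ring.
by apply: (QD); [exact: QM | apply: (QD); exact: QM].
Qed.

Lemma minimal_prime_annihilator (P : R -> Prop) s :
  is_minimal_prime P -> P s -> exists y n, ~ P y /\ y * s ^+ n = 0.
Proof.
move=> [Pprime Pmin] Ps; apply: NNPP => no_annih.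
pose S z := exists y n, ~ P y /\ z = y * s ^+ n.
have [Q [Qprime QS]] : exists Q, is_prime_ideal Q /\ forall x, Q x -> ~ S x.
  apply: prime_ideal_avoiding.
  - by exists 1, 0%N; rewrite expr0 mulr1; split=> //; case: Pprime => _ [].
  - move=> _ _ [y1 [n1 [nPy1 ->]]] [y2 [n2 [nPy2 ->]]].
    exists (y1 * y2), (n1 + n2)%N; split; last by rewrite exprD; ring.
    by case: Pprime => _ [_ Pp] /Pp [].
  - by move=> [y [n [nPy e]]]; apply: no_annih; exists y, n.
have QP x : Q x -> P x.
  by move=> Qx; apply: NNPP => nPx; apply: (QS x Qx); exists x, 0%N; rewrite expr0 mulr1.
apply: (QS s (Pmin Q Qprime QP s Ps)); exists 1, 1%N.
by rewrite expr1 mul1r; split=> //; case: Pprime => _ [].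
Qed.

End MinimalPrimes.

Lemma regular_lift (A B : comPzRingType) (pi : {rmorphism A -> B}) :
  (forall a, pi a = 0 -> nilpotentP a) ->
  (forall a, zero_divisor a -> exists P : A -> Prop, is_minimal_prime P /\ P a) ->
  forall s, regular (pi s) -> regular s.
Proof.
move=> pi_ker_nil zd_minprime s pis_reg; apply: NNPP => /not_regular_zero_divisor.
move=> /zd_minprime [P [Pmin Ps]].
have [y [n [nPy ysn]]] := minimal_prime_annihilator Pmin Ps.
have /pi_ker_nil [m ym] : pi y = 0.
  apply: (regularX (n := n) pis_reg).
  by rewrite mulrC -rmorphXn -rmorphM ysn rmorph0.
apply: nPy; apply: (prime_idealX (n := m) Pmin.1); rewrite ym.
by case: Pmin => [[[]]].
Qed.

(** * Lifting idempotents modulo nilpotents *)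

Lemma idempotent_nilpotent_eq0 (R : pzRingType) (x : R) n :
  x * x = x -> x ^+ n = 0 -> x = 0.
Proof.
move=> xx; case: n => [|n].
  by rewrite expr0 => R_trivial; rewrite -[x]mulr1 R_trivial mulr0.
suff -> : x ^+ n.+1 = x by [].
by elim: n => [|n IH]; rewrite ?expr1 // exprS IH xx.
Qed.

(* [sharpen q = 3q^2 - 2q^3] squares the defect [q - q^2] up to a factor, so
   its iterates on ['X], evaluated at [x], become idempotent once a power of
   [x - x^2] vanishes, while staying congruent to [x] modulo [x - x^2]. *)
Section IdempotentLift.

Let defect (q : {poly int}) := q - q * q.
Let sharpen (q : {poly int}) := q * q * (3%:R - 2%:R * q).
Let sharpen_iter t := iter t sharpen 'X.

Lemma defect_sharpen q :
  defect (sharpen q) = defect q ^+ 2 * (3%:R + 4%:R * defect q).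
Proof. by rewrite /defect /sharpen; ring. Qed.

Lemma defect_sharpen_iter t :
  exists w, defect (sharpen_iter t) = defect 'X ^+ (2 ^ t) * w.
Proof.
elim: t => [|t [w IHw]]; first by exists 1; rewrite mulr1.
exists (w ^+ 2 * (3%:R + 4%:R * defect (sharpen_iter t))).
rewrite /sharpen_iter iterS -/(sharpen_iter t) expnS mul2n -addnn exprD.
by rewrite defect_sharpen IHw; ring.
Qed.

Lemma sharpen_iter_subX t : exists v, sharpen_iter t - 'X = defect 'X * v.
Proof.
elim: t => [|t [v IHv]]; first by exists 0; rewrite subrr mulr0.
have [w dw] := defect_sharpen_iter t.
exists (defect 'X ^+ (2 ^ t).-1 * w * (2%:R * sharpen_iter t - 1) + v).
have -> : sharpen_iter t.+1 - 'X
    = defect (sharpen_iter t) * (2%:R * sharpen_iter t - 1) + (sharpen_iter t - 'X).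
  by rewrite /sharpen_iter iterS -/(sharpen_iter t) /defect /sharpen; ring.
by rewrite dw IHv -(prednK (expn_gt0 2 t)) exprS; ring.
Qed.

Lemma idempotent_lift_nz (R : nzRingType) (x : R) N : (x - x * x) ^+ N = 0 ->
  exists e v, e * e = e /\ e - x = (x - x * x) * v.
Proof.
move=> xN.
pose ev : {rmorphism {poly int} -> R} := horner_morph (commr_int x).
have evX : ev 'X = x by apply: horner_morphX.
have ev_defect q : ev (defect q) = ev q - ev q * ev q by rewrite rmorphB rmorphM.
have [w dw] := defect_sharpen_iter N; have [v dv] := sharpen_iter_subX N.
exists (ev (sharpen_iter N)), (ev v); split.
  apply/eqP; rewrite eq_sym -subr_eq0 -ev_defect dw rmorphM rmorphXn ev_defect evX.
  by rewrite (expr_eq0_leq xN (ltnW (ltn_expl N (ltnSn 1)))) mul0r.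
by rewrite -evX -rmorphB dv rmorphM ev_defect evX.
Qed.

End IdempotentLift.

Lemma idempotent_lift (R : pzRingType) (x : R) N : (x - x * x) ^+ N = 0 ->
  exists e v, e * e = e /\ e - x = (x - x * x) * v.
Proof.
(* Polynomials over [int] can only be evaluated in a nontrivial ring. *)
have [R_trivial|R_nz] := eqVneq (1 : R) 0.
  have all0 (y : R) : y = 0 by rewrite -[y]mulr1 R_trivial mulr0.
  by exists x, 0; rewrite [x * x]all0 [x]all0 subrr mulr0.
exact: (@idempotent_lift_nz
  (HB.pack_for nzRingType R (GRing.PzSemiRing_isNonZero.Build R R_nz))).
Qed.

Section NilpotentMatrices.
Variable R : comPzRingType.

Lemma long_prod_nilpotent_eq0 (S : seq R) : (forall s, s \in S -> nilpotentP s) ->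
  exists N, forall w : seq R, (N <= size w)%N -> {subset w <= S} ->
    \prod_(x <- w) x = 0.
Proof.
elim: S => [|s S IH] S_nil.
  by exists 1%N => [[|x w]] // _ /(_ x (mem_head _ _)).
have [m sm] := S_nil s (mem_head _ _).
have [N SN] := IH (fun t tS => S_nil t (@mem_behead _ (s :: S) t tS)).
exists (m + N)%N => w size_w wS; rewrite (bigID (pred1 s)) /=.
have [m_le|lt_m] := leqP m (count (pred1 s) w).
  rewrite (eq_bigr (fun=> s)); last by move=> x /eqP.
  by rewrite big_const_seq iter_mulr_1 (expr_eq0_leq sm m_le) mul0r.
rewrite -[\prod_(x <- w | x != s) x]big_filter SN ?mulr0 //.
  rewrite size_filter -(leq_add2l (count (pred1 s) w)) count_predC.
  by apply: leq_trans size_w; rewrite leq_add2r ltnW.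
move=> x; rewrite mem_filter => /andP [xs /wS].
by rewrite inE (negbTE xs).
Qed.

(* Invariant: with [N] bounding the length of nonvanishing products of
   entries, an entry of [M ^+ t] kills every product of [N - t] entries. *)
Lemma mx_nilpotent n (M : 'M[R]_n) :
  (forall i j, nilpotentP (M i j)) -> exists N, M ^+ N = 0.
Proof.
move=> M_nil; pose S := [seq M ij.1 ij.2 | ij <- enum {: 'I_n * 'I_n}].
have [N SN] : exists N, forall w : seq R, (N <= size w)%N -> {subset w <= S} ->
    \prod_(x <- w) x = 0.
  by apply: long_prod_nilpotent_eq0 => s /mapP [ij _ ->].
have MS l j : M l j \in S by apply/mapP; exists (l, j); rewrite ?mem_enum.
have killed t i j (w : seq R) : {subset w <= S} -> (N <= size w + t)%N ->
    (M ^+ t) i j * \prod_(x <- w) x = 0.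
  elim: t i j w => [|t IH] i j w wS; first by rewrite addn0 => /SN ->; rewrite ?mulr0.
  move=> Nw; rewrite exprSr -mulmxE mxE mulr_suml big1 // => l _.
  rewrite -mulrA; have := IH i l (M l j :: w); rewrite big_cons; apply.
    by move=> x /predU1P [->|/wS].
  by rewrite /= addSnnS.
exists N; apply/matrixP => i j; rewrite [RHS]mxE.
have := killed N i j [::] (fun x => ltac:(by rewrite in_nil)).
by rewrite big_nil mulr1 add0n => /(_ (leqnn N)).
Qed.

End NilpotentMatrices.

Lemma map_mx_preimage (A B : Type) (f : A -> B) m n (M : 'M[B]_(m, n)) :
  (forall i j, exists a, f a = M i j) -> exists N, map_mx f N = M.
Proof.
move=> M_img.
have [g gP] : exists g : 'I_m * 'I_n -> A, forall ij, f (g ij) = M ij.1 ij.2.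
  exact: (fin_all_exists (fun ij : 'I_m * 'I_n => M_img ij.1 ij.2)).
by exists (\matrix_(i, j) g (i, j)); apply/matrixP => i j; rewrite !mxE gP.
Qed.

Section NilKernel.
Variables (T T' : comPzRingType) (f : {rmorphism T -> T'}).
Hypotheses (f_surj : forall y, exists x, f x = y)
  (f_ker_nil : forall x, f x = 0 -> nilpotentP x).

Lemma mx_ker_nilpotent n (M : 'M[T]_n) : map_mx f M = 0 -> exists N, M ^+ N = 0.
Proof.
move=> /matrixP fM0; apply: mx_nilpotent => i j; apply: f_ker_nil.
by have := fM0 i j; rewrite !mxE.
Qed.

Lemma lift_idempotent_mx k (e : 'M[T']_k) :
  e *m e = e -> exists G, G *m G = G /\ map_mx f G = e.
Proof.
have [g <-] := map_mx_preimage (fun i j => f_surj (e i j)); move=> ee.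
have [N gN] : exists N, (g - g * g) ^+ N = 0.
  by apply: mx_ker_nilpotent; rewrite map_mxB -mulmxE map_mxM ee subrr.
have [G [V [GG GV]]] := idempotent_lift gN.
exists G; split; first by rewrite mulmxE.
apply/eqP; rewrite -subr_eq0 -map_mxB GV -mulmxE map_mxM map_mxB map_mxM ee.
by rewrite subrr mul0mx.
Qed.

Lemma lift_rank_one_idempotent k (P : 'M[T]_k) (n : 'rV[T']_k) (n' : 'cV[T']_k) :
  P *m P = P -> n *m n' = 1%:M -> map_mx f P = n' *m n ->
  exists r c, r *m c = 1%:M /\ c *m r = P /\ map_mx f r = n.
Proof.
move=> PP nn' fP.
have [x fx] := map_mx_preimage (fun i j => f_surj (n i j)).
have [x' fx'] := map_mx_preimage (fun i j => f_surj (n' i j)).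
pose r := x *m P; pose c1 := P *m x'.
have fr : map_mx f r = n by rewrite map_mxM fP fx mulmxA nn' mul1mx.
have fc1 : map_mx f c1 = n' by rewrite map_mxM fP fx' -mulmxA nn' mulmx1.
pose u := (r *m c1) 0 0.
have fu : f u = 1.
  have /matrixP/(_ 0 0) : map_mx f (r *m c1) = 1%:M by rewrite map_mxM fr fc1.
  by rewrite [LHS]mxE [RHS]mxE.
have [v uv] : unitP u.
  by apply: unitP_nilpotent_sub1; apply: f_ker_nil; rewrite rmorphB fu rmorph1 subrr.
have fv : f v = 1 by have := congr1 f uv; rewrite rmorphM fu mul1r rmorph1.
pose c := v *: c1.
have rc : r *m c = 1%:M.
  by rewrite -scalemxAr [r *m c1]mx11_scalar -/u scale_scalar_mx mulrC uv.
have Pc : P *m c = c by rewrite -scalemxAr mulmxA PP.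
have rP : r *m P = r by rewrite -mulmxA PP.
(* [P - c r] is an idempotent in the kernel of [f], hence nilpotent, hence zero. *)
pose D := P - c *m r.
have DD : D * D = D.
  rewrite -mulmxE mulmxBl !mulmxBr PP mulmxA Pc -(mulmxA c r P) rP.
  by rewrite -(mulmxA c r) (mulmxA r c) rc mul1mx subrr subr0.
have [N DN] : exists N, D ^+ N = 0.
  by apply: mx_ker_nilpotent; rewrite map_mxB map_mxM map_mxZ fv scale1r fc1 fr fP subrr.
exists r, c; split=> //; split=> //.
by apply/esym/eqP; rewrite -subr_eq0; apply/eqP/(idempotent_nilpotent_eq0 DD DN).
Qed.

End NilKernel.

(** * Submodules of a ring extension *)

Lemma mem_In (T : eqType) (x : T) (s : seq T) : x \in s -> List.In x s.
Proof. by elim: s => [|y s IH] //=; rewrite inE => /predU1P [->|/IH]; [left|right]. Qed.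

Lemma dual_basis_sum1 (R : pzRingType) k (n : 'rV[R]_k) (n' : 'cV[R]_k) :
  n *m n' = 1%:M -> \sum_i n 0 i * n' i 0 = 1.
Proof. by move=> /matrixP/(_ 0 0); rewrite [LHS]mxE [RHS]mxE eqxx mulr1n. Qed.

Definition span (R T : comPzRingType) (j : {rmorphism R -> T}) k (w : 'I_k -> T)
    (z : T) : Prop :=
  exists a : 'I_k -> R, z = \sum_i j (a i) * w i.

Section Submodules.
Variables (R T : comPzRingType) (j : {rmorphism R -> T}).
Implicit Types L M K N : T -> Prop.

Lemma prod_sub0 L M : prod_sub L M 0.
Proof. by exists [::]; rewrite big_nil. Qed.

Lemma prod_subD L M x y :
  prod_sub L M x -> prod_sub L M y -> prod_sub L M (x + y).
Proof.
move=> [s1 [h1 ->]] [s2 [h2 ->]]; exists (s1 ++ s2); split; last by rewrite big_cat.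
by move=> p /(@List.in_app_or _ s1 s2 p) [/h1|/h2].
Qed.

Lemma prod_subM L M x y : L x -> M y -> prod_sub L M (x * y).
Proof. by move=> Lx My; exists [:: (x, y)]; split=> [p [<-|]|]; rewrite ?big_seq1. Qed.

Lemma prod_sub_sum L M k (x y : 'I_k -> T) :
  (forall i, L (x i)) -> (forall i, M (y i)) -> prod_sub L M (\sum_i x i * y i).
Proof.
move=> Lx My; apply: (big_ind (prod_sub L M)) => [|a b|i _].
- exact: prod_sub0.
- exact: prod_subD.
- exact: prod_subM.
Qed.

Lemma prod_sub_ind L M K : K 0 -> (forall x y, K x -> K y -> K (x + y)) ->
  (forall x y, L x -> M y -> K (x * y)) -> forall z, prod_sub L M z -> K z.
Proof.
move=> K0 KD KM _ [s [hs ->]]; elim: s hs => [|p s IH] hs; first by rewrite big_nil.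
rewrite big_cons; apply: KD; last by apply: IH => q qs; apply: hs; right.
by have [] := hs p (or_introl erefl); apply: KM.
Qed.

Lemma prod_submodule L M :
  is_submodule j L -> is_submodule j M -> is_submodule j (prod_sub L M).
Proof.
move=> [_ [_ LM]] _; split; [exact: prod_sub0 | split; first exact: prod_subD].
move=> r; apply: prod_sub_ind => [|x y|x y Lx My].
- by rewrite mulr0; apply: prod_sub0.
- by rewrite mulrDr; apply: prod_subD.
- by rewrite mulrA; apply: prod_subM => //; apply: LM.
Qed.

Lemma base_submodule : is_submodule j (base_sub j).
Proof.
split; first by exists 0; rewrite rmorph0.
split; first by move=> _ _ [a ->] [b ->]; exists (a + b); rewrite rmorphD.
by move=> r _ [a ->]; exists (r * a); rewrite rmorphM.
Qed.

Lemma submodule_sum N k (x : 'I_k -> T) :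
  is_submodule j N -> (forall i, N (x i)) -> N (\sum_i x i).
Proof. by move=> [N0 [ND _]] Nx; apply: big_ind. Qed.

Lemma span_submodule k (w : 'I_k -> T) : is_submodule j (span j w).
Proof.
split; first by exists (fun=> 0); rewrite big1 // => i _; rewrite rmorph0 mul0r.
split.
  move=> _ _ [a ->] [b ->]; exists (fun i => a i + b i); rewrite -big_split /=.
  by apply: eq_bigr => i _; rewrite rmorphD mulrDl.
move=> r _ [a ->]; exists (fun i => r * a i); rewrite mulr_sumr.
by apply: eq_bigr => i _; rewrite rmorphM mulrA.
Qed.

Lemma span_mem k (w : 'I_k -> T) i : span j w (w i).
Proof.
exists (fun l => (l == i)%:R); rewrite (bigD1 i) //= eqxx rmorph1 mul1r big1 ?addr0 //.
by move=> l /negbTE ->; rewrite rmorph0 mul0r.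
Qed.

Lemma span_min N k (w : 'I_k -> T) :
  is_submodule j N -> (forall i, N (w i)) -> forall z, span j w z -> N z.
Proof.
move=> hN Nw _ [a ->]; apply: submodule_sum => // i.
by case: hN => [_ [_ NM]]; apply: NM.
Qed.

Lemma span_invertible k (r : 'rV[T]_k) (c : 'cV[T]_k) :
  r *m c = 1%:M -> (forall i l, base_sub j (c i 0 * r 0 l)) ->
  invertible_ideal j (span j (r 0)).
Proof.
move=> /dual_basis_sum1 rc cr_base.
split; first exact: span_submodule.
exists (span j (c^~ 0)); split; first exact: span_submodule.
have [_ [baseD baseM]] := base_submodule.
move=> z; split.
  apply: prod_sub_ind => [|x y|_ _ [a ->] [b ->]].
  - by exists 0; rewrite rmorph0.
  - exact: baseD.
  - rewrite mulr_suml; apply: submodule_sum base_submodule _ => l.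
    rewrite mulr_sumr; apply: submodule_sum base_submodule _ => i.
    by rewrite mulrACA [r 0 l * _]mulrC -rmorphM; apply: baseM.
move=> [a ->]; rewrite -[j a]mulr1 -rc mulr_sumr.
under eq_bigr do rewrite mulrA.
apply: prod_sub_sum => [l|i]; last exact: span_mem.
by case: (span_submodule (r 0)) => [_ [_ spanM]]; apply: spanM; apply: span_mem.
Qed.

Lemma invertible_dual_basis N : invertible_ideal j N ->
  exists k (n : 'rV[T]_k) (n' : 'cV[T]_k), n *m n' = 1%:M /\
    (forall i, N (n 0 i)) /\ (forall z i, N z -> base_sub j (z * n' i 0)).
Proof.
move=> [_ [N' [_ NN']]].
have [s [hs s1]] := (NN' 1).2 (ex_intro _ 1 (esym (rmorph1 j))).
have hsi (i : 'I_(size s)) : N (nth 0 s i).1 /\ N' (nth 0 s i).2.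
  by apply/hs/mem_In/mem_nth.
exists (size s), (\row_i (nth 0 s i).1), (\col_i (nth 0 s i).2); split.
  apply/matrixP => i0 j0; rewrite !ord1 [LHS]mxE [RHS]mxE s1 (big_nth 0) big_mkord.
  by apply: eq_bigr => i _; rewrite !mxE.
split=> [i|z i Nz]; first by rewrite mxE; case: (hsi i).
by apply/NN'; rewrite mxE; apply: prod_subM => //; case: (hsi i).
Qed.

Lemma dual_basis_span N k (n : 'rV[T]_k) (n' : 'cV[T]_k) :
  is_submodule j N -> n *m n' = 1%:M -> (forall i, N (n 0 i)) ->
  (forall z i, N z -> base_sub j (z * n' i 0)) ->
  sub_eq (span j (n 0)) N.
Proof.
move=> hN /dual_basis_sum1 nn' Nn coord z; split; first exact: span_min.
move=> Nz; have [a ha] : exists a : 'I_k -> R, forall i, z * n' i 0 = j (a i).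
  exact: (fin_all_exists (fun i => coord z i Nz)).
exists a; rewrite -[z]mulr1 -nn' mulr_sumr.
by apply: eq_bigr => i _; rewrite -ha mulrAC mulrA.
Qed.

Lemma scaled_submodule L (x : T) :
  is_submodule j L -> is_submodule j (fun z => exists l, L l /\ z = x * l).
Proof.
move=> [L0 [LD LM]]; split; first by exists 0; rewrite mulr0.
split.
  move=> _ _ [l [Ll ->]] [l' [Ll' ->]].
  by exists (l + l'); rewrite mulrDr; split=> //; apply: LD.
by move=> r _ [l [Ll ->]]; exists (j r * l); rewrite mulrCA; split=> //; apply: LM.
Qed.

Lemma sub_eq_same_class L M : sub_eq L M -> same_class L M.
Proof.
move=> LM; exists 1; split; first by exists 1; rewrite mulr1.
move=> z; rewrite -LM; split=> [Lz|[y [Ly ->]]]; last by rewrite mul1r.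
by exists z; rewrite mul1r.
Qed.

End Submodules.

(** * The map T(A) -> T(A_red) *)

Section FractionMap.
Variables (A TA B TB : comPzRingType) (iA : {rmorphism A -> TA})
  (pi : {rmorphism A -> B}) (iB : {rmorphism B -> TB}).
Hypotheses (HA : total_ring_of_fractions iA) (Hpi : reduction_map pi)
  (HB : total_ring_of_fractions iB).

Lemma regular_pi s : regular s -> regular (pi s).
Proof.
move=> s_reg y; have [b <-] := Hpi.1 y; rewrite -rmorphM => /Hpi.2 [n].
by rewrite exprMn => /(regularX (n := n) s_reg) bn; apply/Hpi.2; exists n.
Qed.

Definition frac_image (x : TA) (y : TB) : Prop :=
  exists a s, regular s /\ x * iA s = iA a /\ y * iB (pi s) = iB (pi a).

Definition frac_map (x : TA) : TB := epsilon (inhabits 0) (frac_image x).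

Lemma frac_mapP x a s : regular s -> x * iA s = iA a ->
  frac_map x * iB (pi s) = iB (pi a).
Proof.
move=> s_reg xs.
have [a' [s' [s'_reg [xs' ys']]]] : frac_image x (frac_map x).
  apply: (epsilon_spec (inhabits 0) (frac_image x)).
  have [a0 [s0 [s0_reg xs0]]] := HA.2.2 x.
  have [w s0w] := HB.2.1 _ (regular_pi s0_reg).
  exists (iB (pi a0) * w), a0, s0; do !split=> //.
  by rewrite -mulrA [w * _]mulrC s0w mulr1.
have as' : a * s' = a' * s by apply: HA.1; rewrite !rmorphM -xs -xs' mulrAC.
apply: (unitP_mulIr (HB.2.1 _ (regular_pi s'_reg))).
by rewrite mulrAC ys' -!rmorphM as'.
Qed.

Lemma frac_map_eq x y a s : regular s -> x * iA s = iA a ->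
  y * iB (pi s) = iB (pi a) -> frac_map x = y.
Proof.
move=> s_reg xs ys; apply: (unitP_mulIr (HB.2.1 _ (regular_pi s_reg))).
by rewrite (frac_mapP s_reg xs) ys.
Qed.

Fact frac_map_is_nmod : nmod_morphism frac_map.
Proof.
split.
  by apply: (frac_map_eq (s := 1) (a := 0) regular1); rewrite ?mul0r ?rmorph0.
move=> x y; have [a [s [s_reg xs]]] := HA.2.2 x; have [b [t [t_reg yt]]] := HA.2.2 y.
apply: (frac_map_eq (a := a * t + b * s) (regularM s_reg t_reg)).
  by rewrite rmorphD !rmorphM -xs -yt; ring.
by rewrite !rmorphD !rmorphM -(frac_mapP s_reg xs) -(frac_mapP t_reg yt); ring.
Qed.

Fact frac_map_is_monoid : monoid_morphism frac_map.
Proof.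
split; first by apply: (frac_map_eq (s := 1) (a := 1) regular1); rewrite ?mul1r.
move=> x y; have [a [s [s_reg xs]]] := HA.2.2 x; have [b [t [t_reg yt]]] := HA.2.2 y.
apply: (frac_map_eq (a := a * b) (regularM s_reg t_reg)).
  by rewrite !rmorphM -xs -yt; ring.
by rewrite !rmorphM -(frac_mapP s_reg xs) -(frac_mapP t_reg yt); ring.
Qed.

Definition frac_rmorph : {rmorphism TA -> TB} :=
  HB.pack frac_map (GRing.isNmodMorphism.Build _ _ frac_map frac_map_is_nmod)
    (GRing.isMonoidMorphism.Build _ _ frac_map frac_map_is_monoid).

Lemma frac_map_iA a : frac_map (iA a) = iB (pi a).
Proof.
by apply: (frac_map_eq (s := 1) (a := a) regular1); rewrite !rmorph1 mulr1.
Qed.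

Lemma frac_map_ker_nil x : frac_map x = 0 -> nilpotentP x.
Proof.
move=> x0; have [a [s [s_reg xs]]] := HA.2.2 x.
have /Hpi.2 [n an] : pi a = 0.
  by apply: HB.1; rewrite rmorph0 -(frac_mapP s_reg xs) x0 mul0r.
exists n; apply: (unitP_regular (HA.2.1 _ (regularX (n := n) s_reg))).
by rewrite rmorphXn -exprMn mulrC xs -rmorphXn an rmorph0.
Qed.

Lemma frac_map_surj :
  (forall a, zero_divisor a -> exists P : A -> Prop, is_minimal_prime P /\ P a) ->
  forall y, exists x, frac_map x = y.
Proof.
move=> zd_minprime y; have [b [t [t_reg yt]]] := HB.2.2 y.
have [a ab] := Hpi.1 b; have [s st] := Hpi.1 t; subst b t.
have s_reg := regular_lift (fun a => (Hpi.2 a).1) zd_minprime t_reg.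
have [w sw] := HA.2.1 _ s_reg.
exists (iA a * w); apply: (frac_map_eq s_reg _ yt).
by rewrite -mulrA [w * _]mulrC sw mulr1.
Qed.

End FractionMap.

(** * Extension of ideals along a surjection with nil kernel *)

Section NilReduction.
Variables (A TA B TB : comPzRingType) (iA : {rmorphism A -> TA})
  (pi : {rmorphism A -> B}) (iB : {rmorphism B -> TB}) (phi : {rmorphism TA -> TB}).
Hypotheses (phi_iA : forall a, phi (iA a) = iB (pi a))
  (pi_surj : forall b, exists a, pi a = b)
  (pi_ker_nil : forall a, pi a = 0 -> nilpotentP a)
  (iB_inj : injective iB)
  (phi_surj : forall y, exists x, phi x = y)
  (phi_ker_nil : forall x, phi x = 0 -> nilpotentP x).

Local Notation ext := (ext_sub iB phi).

Lemma unitP_lift x : unitP (phi x) -> unitP x.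
Proof.
move=> [y xy]; have [v vy] := phi_surj y; subst y.
have [w xvw] : unitP (x * v).
  by apply/unitP_nilpotent_sub1/phi_ker_nil; rewrite rmorphB rmorphM xy rmorph1 subrr.
by exists (v * w); rewrite mulrA.
Qed.

Lemma ext_subE L : is_submodule iA L ->
  forall z, ext L z <-> exists x, L x /\ z = phi x.
Proof.
move=> [L0 [LD LM]] z; split.
  move=> [s [hs ->]]; elim: s hs => [|p s IH] hs.
    by exists 0; rewrite big_nil rmorph0.
  rewrite big_cons; have [x [Lx ->]] := IH (fun q qs => hs q (or_intror qs)).
  have [a ap] := pi_surj p.1.
  exists (iA a * p.2 + x); split; first by apply: LD => //; apply/LM/hs; left.
  by rewrite rmorphD rmorphM phi_iA ap.
move=> [x [Lx ->]]; exists [:: (1, x)]; split; first by move=> p [<-|].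
by rewrite big_seq1 rmorph1 mul1r.
Qed.

Lemma ext_submodule L : is_submodule iA L -> is_submodule iB (ext L).
Proof.
move=> hL; have [L0 [LD LM]] := hL.
split; first by apply/ext_subE => //; exists 0; rewrite rmorph0.
split.
  move=> _ _ /(ext_subE hL) [x [Lx ->]] /(ext_subE hL) [y [Ly ->]].
  by apply/ext_subE => //; exists (x + y); rewrite rmorphD; split=> //; apply: LD.
move=> b _ /(ext_subE hL) [x [Lx ->]]; have [a <-] := pi_surj b.
by apply/ext_subE => //; exists (iA a * x); rewrite rmorphM phi_iA; split=> //; apply: LM.
Qed.

Lemma ext_prod L M : is_submodule iA L -> is_submodule iA M ->
  sub_eq (ext (prod_sub L M)) (prod_sub (ext L) (ext M)).
Proof.
move=> hL hM z; rewrite (ext_subE (prod_submodule hL hM)); split.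
  move=> [x [LMx ->]]; move: x LMx.
  apply: (prod_sub_ind (K := fun x => prod_sub (ext L) (ext M) (phi x))).
  - by rewrite rmorph0; apply: prod_sub0.
  - by move=> x y; rewrite rmorphD; apply: prod_subD.
  - by move=> x y Lx My; rewrite rmorphM; apply: prod_subM; apply/ext_subE => //;
      [exists x | exists y].
move: z; apply: prod_sub_ind.
- by exists 0; rewrite rmorph0; split=> //; apply: prod_sub0.
- move=> _ _ [x [LMx ->]] [y [LMy ->]].
  by exists (x + y); rewrite rmorphD; split=> //; apply: prod_subD.
- move=> _ _ /(ext_subE hL) [x [Lx ->]] /(ext_subE hM) [y [My ->]].
  by exists (x * y); rewrite rmorphM; split=> //; apply: prod_subM.
Qed.

Lemma ext_base : sub_eq (ext (base_sub iA)) (base_sub iB).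
Proof.
move=> z; rewrite (ext_subE (base_submodule iA)); split.
  by move=> [_ [[a ->] ->]]; exists (pi a); rewrite phi_iA.
move=> [b ->]; have [a <-] := pi_surj b.
by exists (iA a); rewrite phi_iA; split=> //; exists a.
Qed.

Lemma ext_invertible L : invertible_ideal iA L -> invertible_ideal iB (ext L).
Proof.
move=> [hL [L' [hL' LL']]]; split; first exact: ext_submodule.
exists (ext L'); split; first exact: ext_submodule.
move=> z; rewrite -(ext_prod hL hL' z) -ext_base.
rewrite (ext_subE (prod_submodule hL hL')) (ext_subE (base_submodule iA)).
by split=> -[x [hx ->]]; exists x; split=> //; apply/LL'.
Qed.

Lemma ext_span k (w : 'I_k -> TA) (w' : 'I_k -> TB) :
  (forall i, phi (w i) = w' i) -> sub_eq (ext (span iA w)) (span iB w').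
Proof.
move=> ww' z; rewrite (ext_subE (span_submodule iA w)); split.
  move=> [_ [[a ->] ->]]; exists (fun i => pi (a i)); rewrite rmorph_sum.
  by apply: eq_bigr => i _; rewrite rmorphM phi_iA ww'.
move=> [b ->]; have [a ab] : exists a : 'I_k -> A, forall i, pi (a i) = b i.
  exact: (fin_all_exists (fun i => pi_surj (b i))).
exists (\sum_i iA (a i) * w i); split; first by exists a.
by rewrite rmorph_sum; apply: eq_bigr => i _; rewrite rmorphM phi_iA ab ww'.
Qed.

(* For a dual basis [n, n'] of [M] and lifts [l i] of [n 0 i] to [L], the
   sum of the [l i * n' i 0] lies in [A] and maps to [1], so it is a unit of
   [A] that multiplies [M] into [L]. *)
Lemma sub_of_ext_sub L M : is_submodule iA L -> invertible_ideal iA M ->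
  (forall l, L l -> M l) -> (forall m, M m -> exists l, L l /\ phi l = phi m) ->
  forall m, M m -> L m.
Proof.
move=> hL hMi LM ML m Mm; have [_ [_ LZ]] := hL.
have [k [n [n' [nn' [Mn coord]]]]] := invertible_dual_basis hMi.
have [l Ll] : exists l : 'I_k -> TA, forall i, L (l i) /\ phi (l i) = phi (n 0 i).
  exact: (fin_all_exists (fun i => ML _ (Mn i))).
have [b lb] : exists b : 'I_k -> A, forall i, l i * n' i 0 = iA (b i).
  exact: (fin_all_exists (fun i => coord _ i (LM _ (Ll i).1))).
have [c mc] : exists c : 'I_k -> A, forall i, m * n' i 0 = iA (c i).
  exact: (fin_all_exists (fun i => coord _ i Mm)).
have [a' ba'] : unitP (\sum_i b i).
  apply/unitP_nilpotent_sub1/pi_ker_nil/iB_inj.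
  rewrite rmorph0 !rmorphB !rmorph1 -phi_iA !rmorph_sum.
  rewrite -(rmorph1 phi) -(dual_basis_sum1 nn') rmorph_sum -sumrB big1 // => i _.
  by rewrite -lb !rmorphM (Ll i).2 subrr.
have -> : m = iA a' * \sum_i iA (c i) * l i.
  rewrite -[m]mul1r -(rmorph1 iA) -ba' [_ * a']mulrC rmorphM -mulrA; congr (_ * _).
  rewrite rmorph_sum mulr_suml; apply: eq_bigr => i _.
  by rewrite -lb -mulrA [n' i 0 * m]mulrC mc mulrC.
by apply: (LZ); apply: submodule_sum hL _ => i; apply: (LZ); case: (Ll i).
Qed.

Lemma lift_multiplier L M u : invertible_ideal iA L -> is_submodule iA M ->
  (forall l, L l -> exists m, M m /\ phi m = phi u * phi l) ->
  exists y, phi y = phi u /\ forall l, L l -> M (y * l).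
Proof.
move=> hLi hM LM; have [_ [_ MZ]] := hM.
have [k [n [n' [nn' [Ln coord]]]]] := invertible_dual_basis hLi.
have [m Mm] : exists m : 'I_k -> TA, forall i, M (m i) /\ phi (m i) = phi u * phi (n 0 i).
  exact: (fin_all_exists (fun i => LM _ (Ln i))).
exists (\sum_i m i * n' i 0); split.
  rewrite rmorph_sum -[phi u]mulr1 -(rmorph1 phi) -(dual_basis_sum1 nn').
  rewrite !rmorph_sum mulr_sumr; apply: eq_bigr => i _.
  by rewrite !rmorphM (Mm i).2 mulrA.
move=> l Ll; have [c lc] : exists c : 'I_k -> A, forall i, l * n' i 0 = iA (c i).
  exact: (fin_all_exists (fun i => coord _ i Ll)).
rewrite mulr_suml; apply: submodule_sum hM _ => i.
by rewrite -mulrA [n' i 0 * l]mulrC lc mulrC; apply/MZ; case: (Mm i).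
Qed.

Lemma same_class_ext L M : invertible_ideal iA L -> invertible_ideal iA M ->
  same_class L M <-> same_class (ext L) (ext M).
Proof.
move=> hLi hMi; have hL := hLi.1; have hM := hMi.1; split.
  move=> [x [[x' xx'] xLM]]; exists (phi x).
  split; first by exists (phi x'); rewrite -rmorphM xx' rmorph1.
  move=> z; rewrite (ext_subE hM); split.
    move=> [_ [/xLM [l [Ll ->]] ->]]; exists (phi l); rewrite rmorphM.
    by split=> //; apply/ext_subE => //; exists l.
  move=> [_ [/(ext_subE hL) [l [Ll ->]] ->]]; exists (x * l); rewrite rmorphM.
  by split=> //; apply/xLM; exists l.
move=> [X [uX XLM]]; have [u uX'] := phi_surj X; subst X.
have ext_phi K x : is_submodule iA K -> K x -> ext K (phi x).
  by move=> hK Kx; apply/ext_subE => //; exists x.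
have [y [yu yLM]] : exists y, phi y = phi u /\ forall l, L l -> M (y * l).
  apply: lift_multiplier => // l Ll.
  have /XLM /(ext_subE hM) [m [Mm mu]] : exists w, ext L w /\ phi u * phi l = phi u * w.
    by exists (phi l); split=> //; apply: ext_phi.
  by exists m.
exists y; split; first by apply: unitP_lift; rewrite yu.
move=> z; split; last by move=> [l [Ll ->]]; apply: yLM.
apply: (sub_of_ext_sub (scaled_submodule y hL) hMi) => [_ [l [Ll ->]]|m Mm].
  exact: yLM.
have [_ [/(ext_subE hL) [l [Ll ->]] mu]] := (XLM (phi m)).1 (ext_phi _ _ hM Mm).
by exists (y * l); split; [exists l | rewrite rmorphM yu].
Qed.

Lemma ext_class_surj N : invertible_ideal iB N ->
  exists L, invertible_ideal iA L /\ same_class (ext L) N.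
Proof.
move=> hNi; have [k [n [n' [nn' [Nn coord]]]]] := invertible_dual_basis hNi.
have [e iBe] : exists e : 'M[B]_k, map_mx iB e = n' *m n.
  apply: map_mx_preimage => i l; rewrite !mxE big_ord1 mulrC.
  by have [b ->] := coord _ i (Nn l); exists b.
have ee : e *m e = e.
  have iBee : map_mx iB (e *m e) = map_mx iB e.
    by rewrite map_mxM iBe mulmxA -(mulmxA n') nn' mulmx1.
  by apply/matrixP => i l; apply: iB_inj; move/matrixP/(_ i l): iBee; rewrite !mxE.
have [G [GG piG]] := lift_idempotent_mx pi_surj pi_ker_nil ee.
have [r [c [rc [cr phir]]]] :
    exists r c, r *m c = 1%:M /\ c *m r = map_mx iA G /\ map_mx phi r = n.
  apply: lift_rank_one_idempotent nn' _ => //; first by rewrite -map_mxM GG.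
  have -> : map_mx phi (map_mx iA G) = map_mx iB (map_mx pi G).
    by apply/matrixP => i l; rewrite !mxE phi_iA.
  by rewrite piG.
exists (span iA (r 0)); split.
  apply: span_invertible rc _ => i l; exists (G i l).
  by move/matrixP/(_ i l): cr; rewrite !mxE big_ord1.
apply: sub_eq_same_class => z.
rewrite (ext_span (w' := n 0)); last by move=> i; rewrite -phir mxE.
exact: dual_basis_span hNi.1 nn' Nn coord z.
Qed.

End NilReduction.

Theorem corollary5p8 (A TA B TB : comPzRingType)
  (iA : {rmorphism A -> TA}) (pi : {rmorphism A -> B}) (iB : {rmorphism B -> TB}) :
  total_ring_of_fractions iA -> reduction_map pi -> total_ring_of_fractions iB ->
  (forall a : A, zero_divisor a <-> exists P, is_minimal_prime P /\ P a) ->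
  exists phi : {rmorphism TA -> TB},
    (forall a, phi (iA a) = iB (pi a)) /\
    (forall L, invertible_ideal iA L -> invertible_ideal iB (ext_sub iB phi L)) /\
    (forall L M, invertible_ideal iA L -> invertible_ideal iA M ->
       sub_eq (ext_sub iB phi (prod_sub L M))
              (prod_sub (ext_sub iB phi L) (ext_sub iB phi M))) /\
    (forall L M, invertible_ideal iA L -> invertible_ideal iA M ->
       (same_class L M <-> same_class (ext_sub iB phi L) (ext_sub iB phi M))) /\
    (forall N, invertible_ideal iB N ->
       exists L, invertible_ideal iA L /\ same_class (ext_sub iB phi L) N).
Proof.
move=> HA Hpi HB Hz; pose phi := frac_rmorph HA Hpi HB.
have phi_iA : forall a, phi (iA a) = iB (pi a) := frac_map_iA HA Hpi HB.
have pi_surj := Hpi.1; have iB_inj := HB.1.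
have pi_ker_nil a : pi a = 0 -> nilpotentP a := (Hpi.2 a).1.
have phi_surj : forall y, exists x, phi x = y :=
  frac_map_surj HA Hpi HB (fun a => (Hz a).1).
have phi_ker_nil : forall x, phi x = 0 -> nilpotentP x := frac_map_ker_nil HA Hpi HB.
exists phi; split=> //; split; first exact: ext_invertible.
split; first by move=> L M [hL _] [hM _]; apply: ext_prod.
split; first exact: same_class_ext.
exact: ext_class_surj.
Qed.
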